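(* Let $(\mathcal V,\mathcal W,\lambda)$ be a FTvN system, let $E$ be a spectral set in $\mathcal V$, $d\in\mathcal V$ and $\alpha\in\mathbb R$. Then the following are equivalent: (i) $\alpha\ge\langle d,z\rangle$ for all $z\in E$; (ii) $\alpha\ge\langle d,z\rangle$ for all $z\in\overline{\operatorname{conv}(E)}$; (iii) $\alpha\ge\langle\lambda(d),\lambda(z)\rangle$ for all $z\in E$; (iv) $\alpha\ge\langle\lambda(d),\lambda(z)\rangle$ for all $z\in\overline{\operatorname{conv}(E)}$.
   Context: A Fan-Theobald-von Neumann (FTvN) system is a triple $(\mathcal V,\mathcal W,\lambda)$ where $\mathcal V,\mathcal W$ are real inner product spaces and $\lambda:\mathcal V\to\mathcal W$ is a map such that: (A1) $\|\lambda(x)\|=\|x\|$ for all $x\in\mathcal V$; (A2) $\langle x,y\rangle\le\langle\lambda(x),\lambda(y)\rangle$ for all $x,y\in\mathcal V$; (A3) for every $c\in\mathcal V$ and $q\in\lambda(\mathcal V)$ there exists $x\in\mathcal V$ with $\lambda(x)=q$ and $\langle c,x\rangle=\langle\lambda(c),\lambda(x)\rangle$. The $\lambda$-orbit of $u$ is $[u]=\{x\in\mathcal V:\lambda(x)=\lambda(u)\}$. A set $E\subseteq\mathcal V$ is spectral if $E=\lambda^{-1}(Q)$ for some $Q\subseteq\mathcal W$, equivalently $x\in E\Rightarrow[x]\subseteq E$. $\overline{S}$ denotes closure and $\operatorname{conv}$ convex hull. *)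

From mathcomp Require Import all_boot all_order all_algebra.
From mathcomp Require Import reals.
Set Implicit Arguments. Unset Strict Implicit. Unset Printing Implicit Defensive.
Import Order.TTheory GRing.Theory Num.Theory.
Local Open Scope ring_scope.

Definition is_inner_product (R : realType) (V : lmodType R) (ip : V -> V -> R) : Prop :=
  [/\ (forall x y, ip x y = ip y x),
      (forall a x y z, ip (a *: x + y) z = a * ip x z + ip y z),
      (forall x, 0 <= ip x x) &
      (forall x, ip x x = 0 -> x = 0)].

Definition ipnorm (R : realType) (V : lmodType R) (ip : V -> V -> R) (x : V) : R :=
  Num.sqrt (ip x x).

Definition FTvN_system (R : realType) (V W : lmodType R)
  (ipV : V -> V -> R) (ipW : W -> W -> R) (lam : V -> W) : Prop :=
  [/\ is_inner_product ipV, is_inner_product ipW,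
      (forall x, ipnorm ipW (lam x) = ipnorm ipV x),
      (* (A2) *) (forall x y, ipV x y <= ipW (lam x) (lam y)) &
      (* (A3) *) (forall (c : V) (q : W), (exists u, lam u = q) ->
                    exists x, lam x = q /\ ipV c x = ipW (lam c) (lam x))].

Definition spectral (R : realType) (V W : lmodType R) (lam : V -> W) (E : V -> Prop) : Prop :=
  exists Q : W -> Prop, forall x, E x <-> Q (lam x).

Definition conv_hull (R : realType) (V : lmodType R) (E : V -> Prop) (z : V) : Prop :=
  exists (n : nat) (w : 'I_n -> R) (p : 'I_n -> V),
    [/\ (forall i, E (p i)), (forall i, 0 <= w i),
        \sum_(i < n) w i = 1 & z = \sum_(i < n) w i *: p i].

Definition ipclosure (R : realType) (V : lmodType R) (ip : V -> V -> R)
  (S : V -> Prop) (z : V) : Prop :=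
  forall e : R, 0 < e -> exists s, S s /\ ipnorm ip (z - s) < e.

(** The linear functional [<d, .>] is continuous and linear, so a bound on [E]
    passes to convex combinations and then to limits: (i) <-> (ii).  By (A2)
    [<d, z> <= <lam d, lam z>], and by (A3) equality is attained at a point of
    the orbit [[z]], which stays in the spectral set [E]: (i) <-> (iii).  Hence
    (i) only depends on [lam d].  For (iii) -> (iv), given [z] in the closed
    convex hull, (A3) yields [x] with [lam x = lam d] and
    [<lam d, lam z> = <x, z>]; (iii) holds for [x] as well, so (ii) for [x]
    bounds [<x, z>]. *)
From mathcomp Require Import all_boot all_order all_algebra.
From mathcomp Require Import reals.
From mathcomp Require Import lra.
Set Implicit Arguments. Unset Strict Implicit. Unset Printing Implicit Defensive.
Import Order.TTheory GRing.Theory Num.Theory.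
Local Open Scope ring_scope.

Section InnerProduct.
Variables (R : realType) (V : lmodType R) (ip : V -> V -> R).
Hypothesis hip : is_inner_product ip.

Lemma ipC x y : ip x y = ip y x.
Proof. by case: hip. Qed.

Lemma ip_ge0 x : 0 <= ip x x.
Proof. by case: hip. Qed.

Lemma ip0l z : ip 0 z = 0.
Proof.
case: hip => _ ipL _ _; have := ipL 1 0 0 z.
rewrite scaler0 addr0 mul1r; lra.
Qed.

Lemma ipZl a x z : ip (a *: x) z = a * ip x z.
Proof. by case: hip => _ ipL _ _; rewrite -[a *: x]addr0 ipL ip0l addr0. Qed.

Lemma ipDl x y z : ip (x + y) z = ip x z + ip y z.
Proof. by case: hip => _ ipL _ _; rewrite -[x]scale1r ipL mul1r scale1r. Qed.

Lemma ipBl x y z : ip (x - y) z = ip x z - ip y z.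
Proof. by rewrite ipDl -scaleN1r ipZl mulN1r. Qed.

Lemma ipBr x y z : ip z (x - y) = ip z x - ip z y.
Proof. by rewrite ipC ipBl (ipC x) (ipC y). Qed.

Lemma ipZr a x z : ip z (a *: x) = a * ip z x.
Proof. by rewrite ipC ipZl ipC. Qed.

Lemma ip_suml n (w : 'I_n -> R) (p : 'I_n -> V) z :
  ip (\sum_(i < n) w i *: p i) z = \sum_(i < n) w i * ip (p i) z.
Proof.
elim/big_rec2: _ => [|i x y _ <-]; first exact: ip0l.
by rewrite ipDl ipZl.
Qed.

Lemma ipnorm_subrr x : ipnorm ip (x - x) = 0.
Proof. by rewrite /ipnorm subrr ip0l sqrtr0. Qed.

Lemma mulr2_ip_le e x y : 2 * e * ip x y <= e ^+ 2 * ip x x + ip y y.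
Proof.
have := ip_ge0 (e *: x - y).
rewrite !ipBl !ipBr !ipZl !ipZr (ipC y x); lra.
Qed.

Lemma ip_lt_small_norm x e : 0 < e ->
  exists2 del, 0 < del & forall u, ipnorm ip u < del -> ip x u < e.
Proof.
move=> e_gt0; have xx1_gt0 : 0 < ip x x + 1 by have := ip_ge0 x; lra.
pose del := e / (ip x x + 1); have del_gt0 : 0 < del by exact: divr_gt0.
exists del => // u u_lt.
have del_e : del * (ip x x + 1) = e by rewrite mulfVK ?gt_eqF.
have uu_lt : ip u u < del ^+ 2.
  rewrite -[ip u u]sqr_sqrtr ?ip_ge0 // ltr_pXn2r ?nnegrE ?sqrtr_ge0 //.
  exact: ltW.
(* [2 del <x, u> <= del^2 <x, x> + <u, u> < del^2 (<x, x> + 1) = del e] *)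
have := mulr2_ip_le del x u; rewrite expr2 in uu_lt *.
have : 0 <= ip x x := ip_ge0 x; nra.
Qed.

Lemma conv_hull_ip_le (E : V -> Prop) d alpha :
  (forall z, E z -> ip d z <= alpha) ->
  forall z, conv_hull E z -> ip d z <= alpha.
Proof.
move=> hE z [n [w [p [Ep w_ge0 w_sum ->]]]].
rewrite ipC ip_suml -[alpha]mul1r -w_sum mulr_suml.
by apply: ler_sum => i _; rewrite ler_wpM2l // ipC hE.
Qed.

Lemma ipclosure_ip_le (S : V -> Prop) d alpha :
  (forall z, S z -> ip d z <= alpha) ->
  forall z, ipclosure ip S z -> ip d z <= alpha.
Proof.
move=> hS z hz; rewrite leNgt; apply/negP => alpha_lt.
have gap_gt0 : 0 < ip d z - alpha by rewrite subr_gt0.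
have [del del_gt0 small] := ip_lt_small_norm d gap_gt0.
have [s [Ss zs_lt]] := hz del del_gt0.
have := small _ zs_lt; rewrite ipBr; have := hS s Ss; lra.
Qed.

Lemma ipclosure_conv_hull (E : V -> Prop) z : E z -> ipclosure ip (conv_hull E) z.
Proof.
move=> Ez e e_gt0; exists z; split; last by rewrite ipnorm_subrr.
exists 1%N, (fun=> 1), (fun=> z); split => //; first by rewrite big_ord1.
by rewrite big_ord1 scale1r.
Qed.

Lemma ipclosure_conv_hull_ip_le (E : V -> Prop) d alpha :
  (forall z, E z -> ip d z <= alpha) ->
  forall z, ipclosure ip (conv_hull E) z -> ip d z <= alpha.
Proof. by move=> hE; apply: ipclosure_ip_le; apply: conv_hull_ip_le. Qed.

End InnerProduct.

Section FTvN.
Variables (R : realType) (V W : lmodType R).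
Variables (ipV : V -> V -> R) (ipW : W -> W -> R) (lam : V -> W).
Hypothesis hsys : FTvN_system ipV ipW lam.
Variable E : V -> Prop.
Hypothesis hE : spectral lam E.

Lemma spectral_orbit x z : E z -> lam x = lam z -> E x.
Proof. by case: hE => Q hQ /hQ Qz xz; apply/hQ; rewrite xz. Qed.

Lemma exists_ip_eq_lam (c : V) (u : V) :
  exists x, lam x = lam u /\ ipV c x = ipW (lam c) (lam x).
Proof. by case: hsys => _ _ _ _ A3; apply: A3; exists u. Qed.

Lemma spectral_ip_leP d alpha :
  (forall z, E z -> ipV d z <= alpha) <->
  (forall z, E z -> ipW (lam d) (lam z) <= alpha).
Proof.
split=> hd z Ez.
  have [x [xz dx]] := exists_ip_eq_lam d z.
  by rewrite -xz -dx; apply/hd/(spectral_orbit Ez xz).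
by case: hsys => _ _ _ A2 _; apply: le_trans (A2 d z) (hd z Ez).
Qed.

Lemma spectral_lam_ip_le_closure d alpha :
  (forall z, E z -> ipW (lam d) (lam z) <= alpha) ->
  forall z, ipclosure ipV (conv_hull E) z -> ipW (lam d) (lam z) <= alpha.
Proof.
case: hsys => hV hW _ _ _ hd z hz.
have [x [xd zx]] := exists_ip_eq_lam z d.
rewrite -xd (ipC hW) -zx (ipC hV).
apply: (ipclosure_conv_hull_ip_le hV) hz.
by apply/(spectral_ip_leP x alpha); rewrite xd.
Qed.

End FTvN.

Theorem theorem5p3 (R : realType) (V W : lmodType R)
  (ipV : V -> V -> R) (ipW : W -> W -> R) (lam : V -> W)
  (hsys : FTvN_system ipV ipW lam)
  (E : V -> Prop) (hE : spectral lam E) (d : V) (alpha : R) :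
  [<-> (forall z, E z -> ipV d z <= alpha);
       (forall z, ipclosure ipV (conv_hull E) z -> ipV d z <= alpha);
       (forall z, E z -> ipW (lam d) (lam z) <= alpha);
       (forall z, ipclosure ipV (conv_hull E) z -> ipW (lam d) (lam z) <= alpha)].
Proof.
have [hV _ _ _ _] := hsys.
tfae=> h.
- exact: ipclosure_conv_hull_ip_le.
- by apply/(spectral_ip_leP hsys hE) => z /(ipclosure_conv_hull hV); apply: h.
- exact: spectral_lam_ip_le_closure.
- by apply/(spectral_ip_leP hsys hE) => z /(ipclosure_conv_hull hV); apply: h.
Qed.
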